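(* For every $J$-unitary $T$ on ${\cal K}$, $$g(V(T))=g(T),\qquad g_{\mathrm{ess}}(V(T))=g_{\mathrm{ess}}(T),$$ and $$g(T)=g(T^* )=g(T^{-1}),\qquad g_{\mathrm{ess}}(T)=g_{\mathrm{ess}}(T^* )=g_{\mathrm{ess}}(T^{-1}).$$
   Context: ${\cal H}$ is a separable complex Hilbert space, ${\cal K}={\cal H}\oplus{\cal H}$, $J=\begin{pmatrix}{\bf 1}&0\\0&-{\bf 1}\end{pmatrix}$. A bounded invertible $T=\begin{pmatrix}a&b\\c&d\end{pmatrix}$ is $J$-unitary if $T^*JT=J$; $V(T)=\begin{pmatrix}(a^* )^{-1}&bd^{-1}\\-d^{-1}c&d^{-1}\end{pmatrix}$ (a unitary). For a bounded operator $A$ on a Hilbert space set $$g(A)=\min\sigma\Bigl(({\bf 1}+A^*A)^{-\frac12}({\bf 1}-A)^*({\bf 1}-A)({\bf 1}+A^*A)^{-\frac12}\Bigr)=\sup\{g\ge0:\ g({\bf 1}+A^*A)<(A-{\bf 1})^*(A-{\bf 1})\},$$ and let $g_{\mathrm{ess}}(A)$ be defined by the same supremum except that the operator inequality is only required to hold on some subspace of finite codimension. *)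

From HB Require Import structures.
From mathcomp Require Import all_boot all_order all_algebra.
From mathcomp Require Import complex.
From mathcomp Require Import boolp classical_sets reals constructive_ereal ereal.
From Stdlib Require Import ClassicalEpsilon.

Set Implicit Arguments.
Unset Strict Implicit.
Unset Printing Implicit Defensive.

Import Order.TTheory GRing.Theory Num.Theory.
Local Open Scope ring_scope.
Local Open Scope classical_set_scope.

Section Hilbert.
Variable R : realType.
Local Notation C := R[i].

Variable V : lmodType C.
Variable ip : V -> V -> C.

Definition nrm2 (x : V) : R := complex.Re (ip x x).
Definition nrm (x : V) : R := Num.sqrt (nrm2 x).

Definition is_inner_product : Prop :=
  [/\ (forall (a : C) (x y z : V), ip (a *: x + y) z = a * ip x z + ip y z),
      (forall x y : V, ip x y = (ip y x)^*),
      (forall x : V, 0 <= ip x x) &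
      (forall x : V, ip x x = 0 -> x = 0)].

Definition is_complete : Prop :=
  forall u : nat -> V,
    (forall e : R, 0 < e -> exists N : nat, forall m n : nat,
        (N <= m)%N -> (N <= n)%N -> nrm (u m - u n) < e) ->
    exists l : V, forall e : R, 0 < e -> exists N : nat, forall n : nat,
        (N <= n)%N -> nrm (u n - l) < e.

Definition is_separable : Prop :=
  exists d : nat -> V, forall (x : V) (e : R), 0 < e ->
    exists n : nat, nrm (x - d n) < e.

Definition is_sep_hilbert : Prop :=
  [/\ is_inner_product, is_complete & is_separable].

Definition is_linear_op (A : V -> V) : Prop :=
  forall (a : C) (x y : V), A (a *: x + y) = a *: A x + A y.

Definition is_bounded_op (A : V -> V) : Prop :=
  is_linear_op A /\ exists M : R, forall x : V, nrm (A x) <= M * nrm x.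

(* the adjoint A^* (chosen by classical choice; it exists and is unique for
   bounded A on a Hilbert space) *)
Definition adj (A : V -> V) : V -> V :=
  epsilon (inhabits (fun _ : V => 0))
    (fun B : V -> V => forall x y : V, ip (A x) y = ip x (B y)).

Definition is_inverse_op (A B : V -> V) : Prop :=
  is_bounded_op B /\ (forall x : V, B (A x) = x) /\ (forall x : V, A (B x) = x).

Definition invertible_op (A : V -> V) : Prop :=
  is_bounded_op A /\ exists B, is_inverse_op A B.

(* the inverse A^{-1} (chosen by classical choice; unique when it exists) *)
Definition inv_op (A : V -> V) : V -> V :=
  epsilon (inhabits (fun _ : V => 0)) (fun B : V -> V => is_inverse_op A B).

(* the operator inequality  g (1 + A^* A) <= (A - 1)^* (A - 1)  restricted to a
   set of vectors S, written out as quadratic forms: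
   g (|x|^2 + |Ax|^2) <= |Ax - x|^2 for x in S *)
Definition gineq_on (S : set V) (A : V -> V) (g : R) : Prop :=
  forall x : V, S x -> g * (nrm2 x + nrm2 (A x)) <= nrm2 (A x - x).

Definition gfun (A : V -> V) : \bar R :=
  ereal_sup [set (g%:E)%E | g in [set g : R | 0 <= g /\ gineq_on setT A g]].

(* closed subspaces of finite codimension are exactly the orthogonal
   complements of finite families of vectors *)
Definition orth_of (n : nat) (v : 'I_n -> V) : set V :=
  [set x : V | forall i : 'I_n, ip x (v i) = 0].

Definition gess (A : V -> V) : \bar R :=
  ereal_sup [set (g%:E)%E | g in [set g : R | 0 <= g /\
      exists (n : nat) (v : 'I_n -> V), gineq_on (orth_of v) A g]].

End Hilbert.

Section Krein.
Variable R : realType.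
Local Notation C := R[i].
Variable H : lmodType C.
Variable ip : H -> H -> C.

Definition ipK (p q : H * H) : C := ip p.1 q.1 + ip p.2 q.2.

Definition Jop (p : H * H) : H * H := (p.1, - p.2).

Definition blk_a (T : H * H -> H * H) (x : H) : H := (T (x, 0)).1.
Definition blk_b (T : H * H -> H * H) (y : H) : H := (T (0, y)).1.
Definition blk_c (T : H * H -> H * H) (x : H) : H := (T (x, 0)).2.
Definition blk_d (T : H * H -> H * H) (y : H) : H := (T (0, y)).2.

Definition J_unitary (T : H * H -> H * H) : Prop :=
  invertible_op ipK T /\ (forall p, adj ipK T (Jop (T p)) = Jop p).

Definition Vop (T : H * H -> H * H) (p : H * H) : H * H :=
  let a := blk_a T in let b := blk_b T in
  let c := blk_c T in let d := blk_d T in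
  let di := inv_op ip d in
  (inv_op ip (adj ip a) p.1 + b (di p.2), - di (c p.1) + di p.2).

End Krein.

(* Both g and g_ess depend on A only through the quadratic forms |x|^2 + |Ax|^2 and
   |Ax - x|^2, so they do not change when A is replaced by an operator B whose forms
   correspond to those of A under a bounded bijection phi of K with bounded inverse: the
   adjoints of phi and phi^-1 map finite-codimensional orthogonal complements to such.
   For T^-1 take phi = T, which swaps x and Tx.  For T^* = J T^-1 J take phi = J.  For V(T),
   write T = [[a, b], [c, d]]: J-unitarity makes d and a^* invertible, and
   phi (x1, x2) = (x1, c x1 + d x2) satisfies V(T) (phi x) = ((T x)_1, x2), so the pair
   (phi x, V(T) (phi x)) has the same four components as (x, T x).
   The analytic input is the projection theorem, which gives the Riesz representation (hence
   adjoints) and the invertibility of operators that are bounded below with injective adjoint. *)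

From Pilot Require Import Defs.
From HB Require Import structures.
From mathcomp Require Import all_boot all_order all_algebra.
From mathcomp Require Import complex.
From mathcomp Require Import boolp classical_sets reals constructive_ereal ereal.
From Stdlib Require Import ClassicalEpsilon.
From mathcomp Require Import ring lra.

Set Implicit Arguments.
Unset Strict Implicit.
Unset Printing Implicit Defensive.
Import Order.TTheory GRing.Theory Num.Theory.
Local Open Scope ring_scope.

Local Notation re := (@complex.Re _).
Local Notation im := (@complex.Im _).

Lemma reD (R : realType) (z w : R[i]) : re (z + w) = re z + re w.
Proof. by case: z; case: w. Qed.
Lemma reN (R : realType) (z : R[i]) : re (- z) = - re z.
Proof. by case: z. Qed.
Lemma reJ (R : realType) (z : R[i]) : re (z^*) = re z.
Proof. by case: z. Qed.
Lemma reM_real (R : realType) (t : R) (z : R[i]) : re (real_complex R t * z) = t * re z.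
Proof. by case: z => a b /=; rewrite !mul0r subr0. Qed.
Lemma conj_real (R : realType) (t : R) : (real_complex R t)^* = real_complex R t.
Proof. by apply/eqP; rewrite eq_complex /= oppr0 !eqxx. Qed.

Lemma complex_eq0_of_re_rotations (R : realType) (z : R[i]) :
  re z <= 0 -> re (- z) <= 0 -> re ('i * z) <= 0 -> re (- ('i * z)) <= 0 -> z = 0.
Proof.
case: z => a b /= h1 h2 h3 h4.
by apply/eqP; rewrite eq_complex /=; apply/andP; split; apply/eqP; lra.
Qed.

Lemma nrm_le_nrm (R : realType) (V W : lmodType R[i]) (ipV : V -> V -> R[i])
    (ipW : W -> W -> R[i]) (x : V) (y : W) :
  nrm2 ipV x <= nrm2 ipW y -> nrm ipV x <= nrm ipW y.
Proof. exact: ler_wsqrtr. Qed.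

Section Transport.
Variables (R : realType) (V : lmodType R[i]) (ip : V -> V -> R[i]).

Lemma inv_opP (A : V -> V) :
  (exists B, is_inverse_op ip A B) -> is_inverse_op ip A (inv_op ip A).
Proof. exact: epsilon_spec. Qed.

(* The adjoints [phi'] and [psi'] carry orthogonal complements of finite families back and
   forth, which handles g_ess. *)
Lemma g_gess_transport (A B phi psi phi' psi' : V -> V) :
  cancel psi phi -> cancel phi psi ->
  (forall x v, ip (phi x) v = ip x (phi' v)) -> (forall u v, ip (psi u) v = ip u (psi' v)) ->
  (forall x, nrm2 ip x + nrm2 ip (A x) = nrm2 ip (phi x) + nrm2 ip (B (phi x))) ->
  (forall x, nrm2 ip (A x - x) = nrm2 ip (B (phi x) - phi x)) ->
  gfun ip A = gfun ip B /\ gess ip A = gess ip B.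
Proof.
move=> psiK phiK phi_adj psi_adj eq_sum eq_dif; split.
- rewrite /gfun; congr ereal_sup; congr image.
  apply/funext => g; apply/propext; split => -[g0 h]; split => // x _.
  + by have := h (psi x) I; rewrite eq_sum eq_dif psiK.
  + by rewrite eq_sum eq_dif; apply: h.
- rewrite /gess; congr ereal_sup; congr image.
  apply/funext => g; apply/propext; split => -[g0 [n [v h]]]; split => //.
  + exists n, (fun i => psi' (v i)) => x hx.
    have hx' : orth_of ip v (psi x) by move=> i; rewrite psi_adj; apply: hx.
    by have := h _ hx'; rewrite eq_sum eq_dif psiK.
  + exists n, (fun i => phi' (v i)) => x hx.
    have hx' : orth_of ip v (phi x) by move=> i; rewrite phi_adj; apply: hx.
    by rewrite eq_sum eq_dif; apply: h.
Qed.

End Transport.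

Section Hilbert.
Variable R : realType.
Local Notation C := R[i].
Local Notation "t %:C" := (real_complex R t).
Variable H : lmodType C.
Variable ip : H -> H -> C.
Hypothesis hip : is_inner_product ip.
Hypothesis hcomplete : is_complete ip.

Local Notation nrm2 := (nrm2 ip).
Local Notation nrm := (nrm ip).

Lemma ipL a x y z : ip (a *: x + y) z = a * ip x z + ip y z.
Proof. by case: hip => h _ _ _; apply: h. Qed.
Lemma ipC x y : ip x y = (ip y x)^*.
Proof. by case: hip => _ h _ _; apply: h. Qed.
Lemma ip_ge0 x : 0 <= ip x x.
Proof. by case: hip => _ _ h _; apply: h. Qed.
Lemma ip_eq0 x : ip x x = 0 -> x = 0.
Proof. by case: hip => _ _ _ h; apply: h. Qed.

Lemma ipDl x y z : ip (x + y) z = ip x z + ip y z.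
Proof. by rewrite -[x]scale1r ipL mul1r scale1r. Qed.
Lemma ip0l z : ip 0 z = 0.
Proof. by apply: (@addrI _ (ip 0 z)); rewrite -ipDl !addr0. Qed.
Lemma ipZl a x z : ip (a *: x) z = a * ip x z.
Proof. by rewrite -[a *: x]addr0 ipL ip0l addr0. Qed.
Lemma ipNl x z : ip (- x) z = - ip x z.
Proof. by rewrite -scaleN1r ipZl mulN1r. Qed.
Lemma ipBl x y z : ip (x - y) z = ip x z - ip y z.
Proof. by rewrite ipDl ipNl. Qed.
Lemma ipDr x y z : ip x (y + z) = ip x y + ip x z.
Proof. by rewrite [LHS]ipC ipDl rmorphD [ip x y]ipC [ip x z]ipC. Qed.
Lemma ipZr a x z : ip x (a *: z) = a^* * ip x z.
Proof. by rewrite [LHS]ipC ipZl rmorphM [ip x z]ipC. Qed.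
Lemma ip0r x : ip x 0 = 0.
Proof. by rewrite [LHS]ipC ip0l rmorph0. Qed.
Lemma ipNr x z : ip x (- z) = - ip x z.
Proof. by rewrite [LHS]ipC ipNl rmorphN [ip x z]ipC. Qed.
Lemma ipBr x y z : ip x (y - z) = ip x y - ip x z.
Proof. by rewrite ipDr ipNr. Qed.

Lemma ip_ext u v : (forall x, ip x u = ip x v) -> u = v.
Proof. by move=> h; apply/subr0_eq/ip_eq0; rewrite ipBr h subrr. Qed.

Lemma ipxx x : ip x x = (nrm2 x)%:C.
Proof.
by have := ip_ge0 x; rewrite lecE /= /nrm2; case: (ip x x) => a b /= /andP[/eqP -> _].
Qed.
Lemma nrm2_ge0 x : 0 <= nrm2 x.
Proof. by have := ip_ge0 x; rewrite ipxx lecR. Qed.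
Lemma nrm2_eq0 x : nrm2 x = 0 -> x = 0.
Proof. by move=> h; apply: ip_eq0; rewrite ipxx h. Qed.
Lemma nrm2_0 : nrm2 0 = 0.
Proof. by rewrite /nrm2 ip0l. Qed.

Lemma nrm2D x y : nrm2 (x + y) = nrm2 x + nrm2 y + re (ip x y) *+ 2.
Proof. by rewrite /nrm2 ipDl !ipDr [ip y x]ipC !reD reJ mulr2n; lra. Qed.
Lemma nrm2N x : nrm2 (- x) = nrm2 x.
Proof. by rewrite /nrm2 ipNl ipNr opprK. Qed.
Lemma nrm2B x y : nrm2 (x - y) = nrm2 x + nrm2 y - re (ip x y) *+ 2.
Proof. by rewrite nrm2D nrm2N ipNr reN mulNrn. Qed.
Lemma nrm2_distC x y : nrm2 (x - y) = nrm2 (y - x).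
Proof. by rewrite -nrm2N opprB. Qed.

Lemma parallelogram x y : nrm2 (x + y) + nrm2 (x - y) = (nrm2 x + nrm2 y) *+ 2.
Proof. by rewrite nrm2D nrm2B !mulr2n; lra. Qed.

Lemma re_ipZr x y (t : R) : re (ip x (t%:C *: y)) = t * re (ip x y).
Proof. by rewrite ipZr conj_real reM_real. Qed.
Lemma re_ipZ x y (s t : R) : re (ip (s%:C *: x) (t%:C *: y)) = s * t * re (ip x y).
Proof. by rewrite ipZl ipZr conj_real mulrA -rmorphM reM_real mulrC. Qed.
Lemma re_ip_i x y : re (ip x ('i *: y)) = im (ip x y).
Proof. by rewrite ipZr; case: (ip x y) => a b /=; ring. Qed.

Lemma nrm2Z (t : R) x : nrm2 (t%:C *: x) = t ^+ 2 * nrm2 x.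
Proof. by rewrite /nrm2 re_ipZ expr2. Qed.
Lemma nrm2_unitZ (w : C) x : w * w^* = 1 -> nrm2 (w *: x) = nrm2 x.
Proof. by move=> hw; rewrite /nrm2 ipZl ipZr mulrA hw mul1r. Qed.

Lemma sqr_nrm x : nrm x ^+ 2 = nrm2 x.
Proof. by rewrite /nrm sqr_sqrtr // nrm2_ge0. Qed.
Lemma nrm_ge0 x : 0 <= nrm x.
Proof. exact: sqrtr_ge0. Qed.
Lemma nrmN x : nrm (- x) = nrm x.
Proof. by rewrite /nrm nrm2N. Qed.
Lemma nrm_distC x y : nrm (x - y) = nrm (y - x).
Proof. by rewrite /nrm nrm2_distC. Qed.
Lemma nrm_eq0 x : nrm x = 0 -> x = 0.
Proof. by move=> h; apply: nrm2_eq0; rewrite -sqr_nrm h expr0n. Qed.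
Lemma nrm_0 : nrm 0 = 0.
Proof. by rewrite /nrm nrm2_0 sqrtr0. Qed.
Lemma nrm_unitZ (w : C) x : w * w^* = 1 -> nrm (w *: x) = nrm x.
Proof. by move=> hw; rewrite /nrm nrm2_unitZ. Qed.

Lemma nrm_le_sqrt x (c : R) : 0 <= c -> nrm2 x <= c ^+ 2 -> nrm x <= c.
Proof. by move=> hc h; rewrite -(@ler_pXn2r _ 2) // ?nnegrE ?nrm_ge0 // sqr_nrm. Qed.
Lemma nrm_lt_sqrt x (c : R) : 0 < c -> nrm2 x < c ^+ 2 -> nrm x < c.
Proof. by move=> hc h; rewrite -(@ltr_pXn2r _ 2) // ?nnegrE ?nrm_ge0 ?ltW // sqr_nrm. Qed.

(* Expand [|b x - a y|^2 >= 0] with [a = |x|], [b = |y|]. *)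
Lemma cauchy_schwarz_re x y : re (ip x y) <= nrm x * nrm y.
Proof.
set a := nrm x; set b := nrm y.
have [x0|a0] := eqVneq x 0; first by rewrite /a x0 ip0l nrm_0 mul0r.
have [y0|b0] := eqVneq y 0; first by rewrite /b y0 ip0r nrm_0 mulr0.
have hab : 0 < a * b.
  by rewrite mulr_gt0 // lt0r nrm_ge0 andbT; apply: contra_neq (@nrm_eq0 _) _.
have := nrm2_ge0 (b%:C *: x - a%:C *: y).
rewrite nrm2B !nrm2Z re_ipZ -!sqr_nrm -/a -/b mulr2n => h.
by rewrite -(ler_pM2l hab); nra.
Qed.

Lemma nrmD_le x y : nrm (x + y) <= nrm x + nrm y.
Proof.
apply: nrm_le_sqrt; first by rewrite addr_ge0 ?nrm_ge0.
rewrite nrm2D -!sqr_nrm mulr2n.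
by have := cauchy_schwarz_re x y; have := nrm_ge0 x; have := nrm_ge0 y; nra.
Qed.

Lemma nrm2D_le x h : nrm2 (x + h) <= nrm2 x + nrm h * (nrm x *+ 2 + nrm h).
Proof.
rewrite nrm2D -(sqr_nrm h) mulrDr mulrnAr.
by have := cauchy_schwarz_re x h; rewrite !mulr2n; nra.
Qed.


Definition converges (u : nat -> H) (l : H) := forall e : R, 0 < e ->
  exists N : nat, forall n : nat, (N <= n)%N -> nrm (u n - l) < e.

Definition cauchy (u : nat -> H) := forall e : R, 0 < e ->
  exists N : nat, forall m n : nat, (N <= m)%N -> (N <= n)%N -> nrm (u m - u n) < e.

Lemma cauchy_converges u : cauchy u -> exists l, converges u l.
Proof. exact: hcomplete. Qed.

Lemma eventually_inv_lt (e : R) : 0 < e ->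
  exists N : nat, forall n : nat, (N <= n)%N -> n.+1%:R^-1 < e.
Proof.
move=> he; exists (Num.Def.archi_bound e^-1) => n hn.
have hN : e^-1 < (Num.Def.archi_bound e^-1)%:R by apply: archi_boundP; rewrite invr_ge0 ltW.
have hNn : (Num.Def.archi_bound e^-1)%:R <= n%:R :> R by rewrite ler_nat.
rewrite invf_plt ?posrE ?ltr0Sn //.
by apply: lt_le_trans hN (le_trans hNn _); rewrite ler_nat.
Qed.

Lemma nrm2_le_of_converges u l y (c : R) : converges u l -> 0 <= c ->
  (forall n, nrm2 (y - u n) <= c + n.+1%:R^-1) -> nrm2 (y - l) <= c.
Proof.
move=> hul c0 hu; apply/ler_addgt0Pr => e he.
pose eps := Num.min 1 (e / (2 * (2 * c + 3))).
have eps_gt0 : 0 < eps by rewrite lt_min ltr01 /= divr_gt0 //; lra.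
have eps_le1 : eps <= 1 by rewrite ge_min lexx.
have eps_small : eps * (2 * c + 3) <= e / 2.
  have : eps <= e / (2 * (2 * c + 3)) by rewrite ge_min lexx orbT.
  by rewrite !ler_pdivlMr; lra.
have [N1 hN1] : exists N, forall n, (N <= n)%N -> n.+1%:R^-1 < e / 2.
  by apply: eventually_inv_lt; lra.
have [N2 hN2] := hul eps eps_gt0.
pose n := maxn N1 N2.
have hn1 := hN1 n (leq_maxl _ _); have hn2 := hN2 n (leq_maxr _ _).
have hinv1 : n.+1%:R^-1 <= 1 :> R by rewrite invf_le1 ?ler1n ?ltr0Sn.
have hA : nrm (y - u n) <= c + 1.
  apply: nrm_le_sqrt; first lra.
  by apply: le_trans (hu n) _; move: hinv1; clearbody n; set v := n.+1%:R^-1; nra.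
have := nrm2D_le (y - u n) (u n - l); rewrite addrA subrK.
have [A0 t0] := (nrm_ge0 (y - u n), nrm_ge0 (u n - l)).
set A := nrm (y - u n) in hA A0 *; set t := nrm (u n - l) in hn2 t0 *.
have htA : t * A <= eps * (c + 1) by apply: ler_pM => //; apply: ltW.
have htt : t * t <= eps * 1 by apply: ler_pM => //; apply: ltW; lra.
have hsum : t * A + t * A + t * t <= e / 2 by lra.
rewrite mulrDr mulr2n !mulrDr => hX; have hv := hu n.
by move: hn1 hv; set v := n.+1%:R^-1; lra.
Qed.

Lemma re_ip_eq0_of_min z s :
  (forall t : R, nrm2 z <= nrm2 (z - t%:C *: s)) -> re (ip z s) = 0.
Proof.
move=> hmin; have [->|s0] := eqVneq s 0; first by rewrite ip0r.
have ns : 0 < nrm2 s by rewrite lt0r nrm2_ge0 andbT; apply: contra_neq (@nrm2_eq0 _) s0.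
have := hmin (re (ip z s) / nrm2 s); rewrite nrm2B nrm2Z re_ipZr.
move: (re (ip z s)) (nrm2 s) ns => r n n0 h.
have rn : (r / n) ^+ 2 * n = r / n * r by rewrite expr2 -mulrA divfK ?gt_eqF.
have : r / n * r <= 0 by rewrite rn mulr2n in h; lra.
rewrite mulrAC -expr2 pmulr_lle0 ?invr_gt0 // => r2.
by apply/eqP; rewrite -sqrf_eq0 eq_le r2 sqr_ge0.
Qed.

Section Projection.
Variable S : H -> Prop.
Hypothesis S0 : S 0.
Hypothesis S_lin : forall (a b : C) u v, S u -> S v -> S (a *: u + b *: v).
Hypothesis S_closed : forall u l, (forall n, S (u n)) -> converges u l -> S l.
Variable y : H.

Let dists : set R := [set nrm2 (y - s) | s in S].
Let dist2 := inf dists.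

Let dist2_lbound : has_lbound dists.
Proof. by exists 0 => _ [s _ <-]; apply: nrm2_ge0. Qed.

Let dists_nonempty : nonempty dists.
Proof. by exists (nrm2 (y - 0)), 0. Qed.

Lemma dist2_le s : S s -> dist2 <= nrm2 (y - s).
Proof. by move=> Ss; apply: (ge_inf dist2_lbound); exists s. Qed.

Lemma dist2_ge0 : 0 <= dist2.
Proof. by apply: lb_le_inf dists_nonempty _ => _ [s _ <-]; apply: nrm2_ge0. Qed.

Lemma near_dist2 e : 0 < e -> exists s, S s /\ nrm2 (y - s) < dist2 + e.
Proof.
move=> he; have [_ [s Ss <-] hs] := inf_adherent he (conj dists_nonempty dist2_lbound).
by exists s.
Qed.

(* Parallelogram law applied to [y - s] and [y - t], whose sum is twice [y] minus the
   midpoint of [s] and [t]. *)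
Lemma near_minimizers_close s t (e1 e2 : R) : S s -> S t ->
  nrm2 (y - s) <= dist2 + e1 -> nrm2 (y - t) <= dist2 + e2 -> nrm2 (s - t) <= (e1 + e2) *+ 2.
Proof.
move=> Ss St hs ht; pose m := 2^-1%:C *: s + 2^-1%:C *: t.
have hm : dist2 <= nrm2 (y - m) by apply: dist2_le; apply: S_lin.
have ysum : (y - s) + (y - t) = 2%:C *: (y - m).
  rewrite scalerBr scalerDr !scalerA -!rmorphM mulfV ?pnatr_eq0 // rmorph1 !scale1r.
  by rewrite rmorph_nat scaler_nat mulr2n opprD addrACA.
have ydif : (y - s) - (y - t) = t - s by rewrite opprB addrC addrA subrK.
have := parallelogram (y - s) (y - t); rewrite ysum ydif nrm2Z (nrm2_distC t).
by rewrite !mulr2n expr2; lra.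
Qed.

Lemma exists_minimizer : exists2 p, S p & nrm2 (y - p) <= dist2.
Proof.
have inv_gt0 n : 0 < n.+1%:R^-1 :> R by rewrite invr_gt0 ltr0Sn.
have [u hu] := boolp.choice (fun n => near_dist2 (inv_gt0 n)).
have u_cauchy : cauchy u.
  move=> e he; have [N hN] : exists N, forall n, (N <= n)%N -> n.+1%:R^-1 < e ^+ 2 / 4.
    by apply: eventually_inv_lt; apply: divr_gt0; [apply: exprn_gt0 | lra].
  exists N => m n hm hn; apply: nrm_lt_sqrt => //.
  have [[Sm um] [Sn un]] := (hu m, hu n).
  apply: le_lt_trans (near_minimizers_close Sm Sn (ltW um) (ltW un)) _.
  move: (hN _ hm) (hN _ hn); rewrite mulr2n.
  by set a := m.+1%:R^-1; set b := n.+1%:R^-1; lra.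
have [p hp] := cauchy_converges u_cauchy.
exists p; first by apply: (S_closed (u := u)) => // n; case: (hu n).
by apply: nrm2_le_of_converges hp dist2_ge0 _ => n; case: (hu n) => _ /ltW.
Qed.

Lemma exists_orthogonal_of_notin : ~ S y -> exists z, z <> 0 /\ forall s, S s -> ip s z = 0.
Proof.
move=> Sy; have [p Sp hp] := exists_minimizer.
exists (y - p); split=> [/subr0_eq yp|s Ss]; first by apply: Sy; rewrite yp.
have re0 : forall s, S s -> re (ip (y - p) s) = 0.
  move=> s' Ss'; apply: re_ip_eq0_of_min => t; apply: le_trans hp _.
  have -> : y - p - t%:C *: s' = y - (1 *: p + t%:C *: s') by rewrite scale1r opprD addrA.
  by apply: dist2_le; apply: S_lin.
have im0 : im (ip (y - p) s) = 0.
  by rewrite -re_ip_i re0 // -[_ *: s]addr0 -(scaler0 _ 0); apply: S_lin.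
rewrite ipC; move: (re0 s Ss) im0; case: (ip (y - p) s) => a b /= -> ->.
by apply/eqP; rewrite eq_complex /= oppr0 !eqxx.
Qed.

End Projection.

Lemma lin0 (A : H -> H) : is_linear_op A -> A 0 = 0.
Proof.
move=> hA; have := hA 1 0 0; rewrite !scale1r addr0 => h.
by apply: (@addrI _ (A 0)); rewrite addr0 -h.
Qed.
Lemma linZ (A : H -> H) a x : is_linear_op A -> A (a *: x) = a *: A x.
Proof. by move=> hA; rewrite -[a *: x]addr0 hA lin0 // addr0. Qed.
Lemma linD (A : H -> H) x y : is_linear_op A -> A (x + y) = A x + A y.
Proof. by move=> hA; rewrite -[x]scale1r hA !scale1r. Qed.
Lemma linN (A : H -> H) x : is_linear_op A -> A (- x) = - A x.
Proof. by move=> hA; rewrite -scaleN1r linZ // scaleN1r. Qed.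
Lemma linB (A : H -> H) x y : is_linear_op A -> A (x - y) = A x - A y.
Proof. by move=> hA; rewrite linD // linN. Qed.

Lemma eq_of_nrm_small x y : (forall e : R, 0 < e -> nrm (x - y) <= e) -> x = y.
Proof.
move=> h; apply/subr0_eq/nrm_eq0/eqP.
by rewrite eq_le nrm_ge0 andbT; apply/ler_addgt0Pr => e he; rewrite add0r h.
Qed.

Lemma converges_cauchy u l : converges u l -> cauchy u.
Proof.
move=> hul e he; have [N hN] : exists N, forall n, (N <= n)%N -> nrm (u n - l) < e / 2.
  by apply: hul; lra.
exists N => m n hm hn; rewrite -[u m](subrK l) -addrA.
apply: le_lt_trans (nrmD_le _ _) _; rewrite (nrm_distC l).
by have := hN _ hm; have := hN _ hn; lra.
Qed.

Lemma converges_unique u l l' : converges u l -> converges u l' -> l = l'.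
Proof.
move=> hl hl'; apply: eq_of_nrm_small => e he.
have he2 : 0 < e / 2 by lra.
have [[N hN] [N' hN']] := (hl _ he2, hl' _ he2).
set n := maxn N N'; have [hn hn'] := (hN n (leq_maxl N N'), hN' n (leq_maxr N N')).
have -> : l - l' = - (u n - l) + (u n - l') by rewrite opprB addrA subrK.
apply: le_trans (nrmD_le _ _) _; rewrite nrmN.
by move: hn hn'; set a := nrm _; set b := nrm _; lra.
Qed.

Lemma bounded_op_converges A u l : is_bounded_op ip A -> converges u l ->
  converges (fun n => A (u n)) (A l).
Proof.
move=> [hA [M hM]] hul e he.
have hM1 : 0 < `|M| + 1 by rewrite ltr_wpDl.
have [N hN] := hul _ (divr_gt0 he hM1).
exists N => n hn; rewrite -linB //.
apply: le_lt_trans (le_trans (hM _) (ler_wpM2r (nrm_ge0 _) (ler_norm M))) _.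
apply: le_lt_trans (ler_wpM2l (normr_ge0 M) (ltW (hN _ hn))) _.
by rewrite mulrA ltr_pdivrMr // mulrDr mulr1 mulrC ltrDl.
Qed.

Definition lin_form (f : H -> C) := forall a x y, f (a *: x + y) = a * f x + f y.

Lemma lin_form0 f : lin_form f -> f 0 = 0.
Proof.
move=> hf; have := hf 1 0 0; rewrite scale1r addr0 mul1r => h.
by apply: (@addrI _ (f 0)); rewrite addr0 -h.
Qed.
Lemma lin_formZ f a x : lin_form f -> f (a *: x) = a * f x.
Proof. by move=> hf; rewrite -[a *: x]addr0 hf lin_form0 // addr0. Qed.
Lemma lin_formB f x y : lin_form f -> f (x - y) = f x - f y.
Proof. by move=> hf; rewrite addrC -scaleN1r hf mulN1r addrC. Qed.

(* Multiplying [f l] by the units [1, -1, i, -i] and bounding each real part shows [f l = 0]. *)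
Lemma lin_form_ker_closed f (M : R) : lin_form f -> (forall x, re (f x) <= M * nrm x) ->
  forall u l, (forall n, f (u n) = 0) -> converges u l -> f l = 0.
Proof.
move=> hf hM u l hu hul.
have rot w : w * w^* = 1 -> re (w * f l) <= 0.
  move=> hw; apply/ler_addgt0Pr => e he; rewrite add0r.
  have hM1 : 0 < `|M| + 1 by rewrite ltr_wpDl.
  have [N hN] := hul _ (divr_gt0 he hM1).
  have -> : w * f l = f (w *: (l - u N)) by rewrite lin_formZ // lin_formB // hu subr0.
  apply: le_trans (hM _) _; rewrite nrm_unitZ // nrm_distC.
  apply: le_trans (ler_wpM2r (nrm_ge0 _) (ler_norm M)) _.
  apply: le_trans (ler_wpM2l (normr_ge0 M) (ltW (hN N (leqnn N)))) _.
  by rewrite mulrA ler_pdivrMr // mulrDr mulr1 mulrC lerDl ltW.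
have unit_i : 'i * 'i^* = 1 :> C.
  by apply/eqP; rewrite eq_complex /=; apply/andP; split; apply/eqP; ring.
apply: complex_eq0_of_re_rotations.
- by rewrite -[f l]mul1r rot // rmorph1 mulr1.
- by rewrite -mulN1r rot // rmorphN1 mulN1r opprK.
- exact: rot.
- by rewrite -mulNr rot // rmorphN mulrNN.
Qed.

Lemma riesz f : lin_form f ->
  (forall u l, (forall n, f (u n) = 0) -> converges u l -> f l = 0) ->
  exists w, forall x, f x = ip x w.
Proof.
move=> hf hcl; have [f0|/existsNP [y fy]] := classic (forall x, f x = 0).
  by exists 0 => x; rewrite f0 ip0r.
have ker_lin a b u v : f u = 0 -> f v = 0 -> f (a *: u + b *: v) = 0.
  by move=> hu hv; rewrite hf lin_formZ // hu hv !mulr0 addr0.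
have [z [z0 hz]] := exists_orthogonal_of_notin (lin_form0 hf) ker_lin hcl fy.
have fz : f z != 0 by apply/eqP => /hz/ip_eq0.
have zz : ip z z != 0 by apply/eqP => /ip_eq0.
exists ((f z / ip z z)^* *: z) => x; rewrite ipZr conjCK.
have : ip (x - (f x / f z) *: z) z = 0.
  by apply: hz; rewrite lin_formB // lin_formZ // divfK // subrr.
rewrite ipBl ipZl => /subr0_eq ->.
by field; apply/andP.
Qed.

Lemma adjoint_exists A : is_bounded_op ip A -> exists B, forall x y, ip (A x) y = ip x (B y).
Proof.
move=> [hA [M hM]].
suff /boolp.choice[B hB] : forall y, exists w, forall x, ip (A x) y = ip x w by exists B.
move=> y.
have hf : lin_form (fun x => ip (A x) y) by move=> a x z /=; rewrite hA ipL.
apply: riesz => //; apply: (@lin_form_ker_closed _ (`|M| * nrm y)) => // x.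
apply: le_trans (cauchy_schwarz_re _ _) _; rewrite mulrAC.
apply: ler_wpM2r; first exact: nrm_ge0.
by apply: le_trans (hM x) _; apply: ler_wpM2r; [exact: nrm_ge0 | exact: ler_norm].
Qed.

Lemma ip_adjr A : is_bounded_op ip A -> forall x y, ip (A x) y = ip x (adj ip A y).
Proof. by move=> hA; exact: (epsilon_spec _ _ (adjoint_exists hA)). Qed.

Lemma ip_adjl A : is_bounded_op ip A -> forall x y, ip (adj ip A y) x = ip y (A x).
Proof. by move=> hA x y; rewrite ipC -ip_adjr // -ipC. Qed.

Lemma adj_linear A : is_bounded_op ip A -> is_linear_op (adj ip A).
Proof.
move=> hA a y z; apply: ip_ext => x.
by rewrite -ip_adjr // ipDr ipZr ipDr ipZr -!ip_adjr.
Qed.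

(* [|A^* y|^2 = <A A^* y, y> <= |M| |A^* y| |y|], then divide by [|A^* y|]. *)
Lemma adj_bounded A : is_bounded_op ip A -> is_bounded_op ip (adj ip A).
Proof.
move=> hA; split; first exact: adj_linear.
case: (hA) => _ [M hM]; exists `|M| => y.
have key : nrm (adj ip A y) ^+ 2 <= `|M| * nrm (adj ip A y) * nrm y.
  rewrite sqr_nrm /nrm2 -ip_adjr //; apply: le_trans (cauchy_schwarz_re _ _) _.
  apply: ler_wpM2r; first exact: nrm_ge0.
  by apply: le_trans (hM _) _; apply: ler_wpM2r; [exact: nrm_ge0 | exact: ler_norm].
have := nrm_ge0 (adj ip A y); have := nrm_ge0 y; have := normr_ge0 M.
move: key; set n := nrm (adj ip A y); set m := nrm y; set c := `|M| => key c0 m0 n0.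
by have := mulr_ge0 c0 m0; rewrite expr2 in key; nra.
Qed.

Lemma range_closed_of_bounded_below A : is_bounded_op ip A -> (forall x, nrm x <= nrm (A x)) ->
  forall u l, (forall n, exists x, A x = u n) -> converges u l -> exists x, A x = l.
Proof.
move=> hA hbelow u l hu hul; have [x hx] := boolp.choice hu.
have x_cauchy : cauchy x.
  move=> e he; have [N hN] := converges_cauchy hul he.
  exists N => m n hm hn; apply: le_lt_trans (hbelow _) _.
  by case: hA => hlin _; rewrite linB // !hx; apply: hN.
have [x0 hx0] := cauchy_converges x_cauchy.
exists x0; apply: (converges_unique (bounded_op_converges hA hx0)).
by move=> e he; have [N hN] := hul e he; exists N => n hn /=; rewrite hx; apply: hN.
Qed.

(* A vector orthogonal to the closed range of [A] is killed by the adjoint [B]. *)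
Lemma surjective_of_bounded_below A B : is_bounded_op ip A -> (forall x, nrm x <= nrm (A x)) ->
  (forall x y, ip (A x) y = ip x (B y)) -> (forall y, B y = 0 -> y = 0) ->
  forall y, exists x, A x = y.
Proof.
move=> hA hbelow hB hBinj y; case: (classic (exists x, A x = y)) => // hy; exfalso.
have [hlin _] := hA.
have S0 : exists x, A x = 0 by exists 0; apply: lin0.
have S_lin a b u v : (exists x, A x = u) -> (exists x, A x = v) -> exists x, A x = a *: u + b *: v.
  by move=> [x <-] [x' <-]; exists (a *: x + b *: x'); rewrite hlin linZ.
have [z [z0 hz]] := exists_orthogonal_of_notin (S := fun v => exists x, A x = v)
  S0 S_lin (range_closed_of_bounded_below hA hbelow) hy.
by apply/z0/hBinj/ip_eq0; rewrite -hB; apply: hz; exists (B z).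
Qed.

Lemma inverse_of_bounded_below A B : is_bounded_op ip A -> (forall x, nrm x <= nrm (A x)) ->
  (forall x y, ip (A x) y = ip x (B y)) -> (forall y, B y = 0 -> y = 0) ->
  exists Ai, is_inverse_op ip A Ai.
Proof.
move=> hA hbelow hB hBinj.
have [Ai AiK] := boolp.choice (surjective_of_bounded_below hA hbelow hB hBinj).
have [hlin _] := hA.
have A_inj x x' : A x = A x' -> x = x'.
  move=> h; apply/subr0_eq/nrm_eq0/eqP; rewrite eq_le nrm_ge0 andbT.
  by apply: le_trans (hbelow _) _; rewrite linB // h subrr nrm_0.
exists Ai; split; [split | split=> [x|//]].
- by move=> a y z; apply: A_inj; rewrite hlin !AiK.
- by exists 1 => y; rewrite mul1r -{2}(AiK y); apply: hbelow.
- by apply: A_inj; rewrite AiK.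
Qed.

Lemma nrm_le_of_nrm2D x y w : nrm2 y = nrm2 x + nrm2 w -> nrm x <= nrm y.
Proof. by move=> h; apply: nrm_le_nrm; rewrite h lerDl nrm2_ge0. Qed.

Lemma eq0_of_nrm_le x y : nrm x <= nrm y -> y = 0 -> x = 0.
Proof. by move=> h y0; apply/nrm_eq0/eqP; rewrite eq_le nrm_ge0 andbT -nrm_0 -y0. Qed.

Local Notation K := (H * H)%type.
Local Notation ipk := (ipK ip).
Local Notation nrm2K := (Defs.nrm2 ipk).
Local Notation nrmK := (Defs.nrm ipk).

Lemma nrm2K_pair (p : K) : nrm2K p = nrm2 p.1 + nrm2 p.2.
Proof. by rewrite /Defs.nrm2 /ipK reD. Qed.

Lemma nrm_fst_le (p : K) : nrm p.1 <= nrmK p.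
Proof. by apply: nrm_le_nrm; rewrite nrm2K_pair lerDl nrm2_ge0. Qed.
Lemma nrm_snd_le (p : K) : nrm p.2 <= nrmK p.
Proof. by apply: nrm_le_nrm; rewrite nrm2K_pair lerDr nrm2_ge0. Qed.
Lemma nrmK_inl x : nrmK (x, 0) = nrm x.
Proof. by rewrite /Defs.nrm nrm2K_pair /= nrm2_0 addr0. Qed.
Lemma nrmK_inr y : nrmK (0, y) = nrm y.
Proof. by rewrite /Defs.nrm nrm2K_pair /= nrm2_0 add0r. Qed.

Lemma inl_linear a (x y : H) : ((a *: x + y, 0) : K) = a *: (x, 0) + (y, 0).
Proof. by change ((a *: x + y, 0) = (a *: x + y, a *: (0 : H) + 0) :> K); rewrite scaler0 addr0. Qed.
Lemma inr_linear a (x y : H) : ((0, a *: x + y) : K) = a *: (0, x) + (0, y).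
Proof. by change ((0, a *: x + y) = (a *: (0 : H) + 0, a *: x + y) :> K); rewrite scaler0 addr0. Qed.

Lemma compose_bounded (F : K -> K) (emb : H -> K) (pr : K -> H) :
  is_bounded_op ipk F ->
  (forall a x y, emb (a *: x + y) = a *: emb x + emb y) ->
  (forall a p q, pr (a *: p + q) = a *: pr p + pr q) ->
  (forall x, nrmK (emb x) = nrm x) -> (forall p, nrm (pr p) <= nrmK p) ->
  is_bounded_op ip (fun x => pr (F (emb x))).
Proof.
move=> [hF [M hM]] hemb hpr emb_iso pr_contr; split=> [a x y /=|].
  by rewrite hemb hF hpr.
by exists M => x; apply: le_trans (pr_contr _) _; rewrite -emb_iso; apply: hM.
Qed.

Section Blocks.
Variable F : K -> K.
Hypothesis hF : is_bounded_op ipk F.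

Lemma blk_a_bounded : is_bounded_op ip (blk_a F).
Proof. exact: compose_bounded hF inl_linear _ nrmK_inl nrm_fst_le. Qed.
Lemma blk_b_bounded : is_bounded_op ip (blk_b F).
Proof. exact: compose_bounded hF inr_linear _ nrmK_inr nrm_fst_le. Qed.
Lemma blk_c_bounded : is_bounded_op ip (blk_c F).
Proof. exact: compose_bounded hF inl_linear _ nrmK_inl nrm_snd_le. Qed.
Lemma blk_d_bounded : is_bounded_op ip (blk_d F).
Proof. exact: compose_bounded hF inr_linear _ nrmK_inr nrm_snd_le. Qed.

Lemma block_decomp (p : K) :
  F p = (blk_a F p.1 + blk_b F p.2, blk_c F p.1 + blk_d F p.2).
Proof.
case: hF => hlin _; case: p => x y /=.
have -> : ((x, y) : K) = (x, 0) + (0, y) by change ((x, y) = (x + 0, 0 + y) :> K); rewrite addr0 add0r.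
by rewrite -[(x, 0)]scale1r hlin scale1r.
Qed.

Definition block_adj (q : K) : K :=
  (adj ip (blk_a F) q.1 + adj ip (blk_c F) q.2, adj ip (blk_b F) q.1 + adj ip (blk_d F) q.2).

Lemma ipK_block_adj p q : ipk (F p) q = ipk p (block_adj q).
Proof.
rewrite block_decomp /ipK /block_adj /= !ipDl !ipDr.
rewrite (ip_adjr blk_a_bounded) (ip_adjr blk_b_bounded).
by rewrite (ip_adjr blk_c_bounded) (ip_adjr blk_d_bounded); ring.
Qed.

Lemma ipK_adjr p q : ipk (F p) q = ipk p (adj ipk F q).
Proof.
have adj_ex : exists B : K -> K, forall x y, ipk (F x) y = ipk x (B y).
  by exists block_adj; apply: ipK_block_adj.
by move: p q; exact: (epsilon_spec _ _ adj_ex).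
Qed.

Lemma adjK_block q : adj ipk F q = block_adj q.
Proof.
have h p : ipk p (adj ipk F q) = ipk p (block_adj q) by rewrite -ipK_adjr ipK_block_adj.
case E : (adj ipk F q) => [u v]; case E' : (block_adj q) => [u' v'].
congr pair; apply: ip_ext => x.
- by have := h (x, 0); rewrite E E' /ipK /= !ip0l !addr0.
- by have := h (0, x); rewrite E E' /ipK /= !ip0l !add0r.
Qed.

End Blocks.

Lemma ipK_Jl p q : ipk (Jop p) q = ipk p (Jop q).
Proof. by rewrite /ipK /Jop /= ipNl ipNr. Qed.
Lemma JopK : involutive (@Jop _ H).
Proof. by case=> x y; rewrite /Jop /= opprK. Qed.
Lemma nrm2K_J (p : K) : nrm2K (Jop p) = nrm2K p.
Proof. by rewrite !nrm2K_pair /Jop /= nrm2N. Qed.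
Lemma JopB (p q : K) : Jop (p - q) = Jop p - Jop q.
Proof. by case: p q => x y [x' y']; change ((x - x', - (y - y')) = (x - x', - y - - y')); rewrite opprD. Qed.

Section JUnitary.
Variable T : K -> K.
Hypothesis hT : J_unitary ip T.

Local Notation Ti := (inv_op ipk T).
Local Notation a := (blk_a T).
Local Notation b := (blk_b T).
Local Notation c := (blk_c T).
Local Notation d := (blk_d T).
Local Notation a' := (adj ip (blk_a T)).
Local Notation b' := (adj ip (blk_b T)).
Local Notation c' := (adj ip (blk_c T)).
Local Notation d' := (adj ip (blk_d T)).

Lemma T_bounded : is_bounded_op ipk T.
Proof. by case: hT => [[]]. Qed.

Lemma Tinv_inverse : is_inverse_op ipk T Ti.
Proof. by case: hT => [[_ hinv] _]; apply: inv_opP. Qed.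
Lemma TK : cancel T Ti.
Proof. by case: Tinv_inverse => _ []. Qed.
Lemma TinvK : cancel Ti T.
Proof. by case: Tinv_inverse => _ []. Qed.
Lemma Tinv_bounded : is_bounded_op ipk Ti.
Proof. by case: Tinv_inverse. Qed.

Lemma adj_J_unitary : adj ipk T = fun z => Jop (Ti (Jop z)).
Proof.
apply: funext => z; case: hT => _ hJ.
by have := hJ (Ti (Jop z)); rewrite TinvK JopK.
Qed.

Lemma J_form_T p q : ipk (T p) (Jop (T q)) = ipk p (Jop q).
Proof. by rewrite (ipK_adjr T_bounded); case: hT => _ ->. Qed.
Lemma J_form_Tinv p q : ipk (Ti p) (Jop (Ti q)) = ipk p (Jop q).
Proof. by rewrite -J_form_T !TinvK. Qed.

Lemma re_J_form (p : K) : re (ipk p (Jop p)) = nrm2 p.1 - nrm2 p.2.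
Proof. by rewrite /ipK /Jop /= ipNr reD reN. Qed.

Lemma J_norm_T p : nrm2 (T p).1 - nrm2 (T p).2 = nrm2 p.1 - nrm2 p.2.
Proof. by rewrite -!re_J_form J_form_T. Qed.
Lemma J_norm_Tinv p : nrm2 (Ti p).1 - nrm2 (Ti p).2 = nrm2 p.1 - nrm2 p.2.
Proof. by rewrite -!re_J_form J_form_Tinv. Qed.

Lemma a_bounded : is_bounded_op ip a. Proof. exact: blk_a_bounded T_bounded. Qed.
Lemma b_bounded : is_bounded_op ip b. Proof. exact: blk_b_bounded T_bounded. Qed.
Lemma c_bounded : is_bounded_op ip c. Proof. exact: blk_c_bounded T_bounded. Qed.
Lemma d_bounded : is_bounded_op ip d. Proof. exact: blk_d_bounded T_bounded. Qed.

Lemma ip_blk_aa_cc x x' : ip (a x) (a x') - ip (c x) (c x') = ip x x'.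
Proof. by have := J_form_T (x, 0) (x', 0); rewrite /ipK /Jop /= ipNr ip0l addr0. Qed.
Lemma ip_blk_ab_cd x y : ip (a x) (b y) = ip (c x) (d y).
Proof.
have := J_form_T (x, 0) (0, y); rewrite /ipK /Jop /= ipNr ip0l ip0r addr0.
by move/subr0_eq.
Qed.

Lemma nrm2_blk_a x : nrm2 (a x) = nrm2 x + nrm2 (c x).
Proof. by have := J_norm_T (x, 0); rewrite /= nrm2_0; lra. Qed.
Lemma nrm2_blk_d y : nrm2 (d y) = nrm2 y + nrm2 (b y).
Proof. by have := J_norm_T (0, y); rewrite /= nrm2_0; lra. Qed.

Lemma Tinv_J w : Ti w = Jop (adj ipk T (Jop w)).
Proof. by rewrite adj_J_unitary !JopK. Qed.

Lemma Tinv_inl y : Ti (y, 0) = (a' y, - b' y).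
Proof.
rewrite Tinv_J (adjK_block T_bounded) /block_adj /Jop /= oppr0.
by rewrite (lin0 (adj_linear c_bounded)) (lin0 (adj_linear d_bounded)) !addr0.
Qed.
Lemma Tinv_inr y : Ti (0, y) = (- c' y, d' y).
Proof.
rewrite Tinv_J (adjK_block T_bounded) /block_adj /Jop /=.
rewrite (lin0 (adj_linear a_bounded)) (lin0 (adj_linear b_bounded)) !add0r.
by rewrite (linN _ (adj_linear c_bounded)) (linN _ (adj_linear d_bounded)) opprK.
Qed.

Lemma nrm2_adj_a y : nrm2 (a' y) = nrm2 y + nrm2 (b' y).
Proof. by have := J_norm_Tinv (y, 0); rewrite Tinv_inl /= nrm2_0 nrm2N; lra. Qed.
Lemma nrm2_adj_d y : nrm2 (d' y) = nrm2 y + nrm2 (c' y).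
Proof. by have := J_norm_Tinv (0, y); rewrite Tinv_inr /= nrm2_0 nrm2N; lra. Qed.

Local Notation di := (inv_op ip d).

Lemma blk_d_inverse : is_inverse_op ip d di.
Proof.
apply/inv_opP/(inverse_of_bounded_below d_bounded (B := d')).
- by move=> y; apply: nrm_le_of_nrm2D (nrm2_blk_d y).
- exact: ip_adjr d_bounded.
- by move=> y; apply/eq0_of_nrm_le/nrm_le_of_nrm2D/nrm2_adj_d.
Qed.

Lemma adj_a_inverse : is_inverse_op ip a' (inv_op ip a').
Proof.
apply/inv_opP/(inverse_of_bounded_below (adj_bounded a_bounded) (B := a)).
- by move=> y; apply: nrm_le_of_nrm2D (nrm2_adj_a y).
- by move=> x y; exact: ip_adjl a_bounded y x.
- by move=> y; apply/eq0_of_nrm_le/nrm_le_of_nrm2D/nrm2_blk_a.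
Qed.

Lemma blk_dK : cancel d di.
Proof. by case: blk_d_inverse => _ []. Qed.
Lemma blk_dKV : cancel di d.
Proof. by case: blk_d_inverse => _ []. Qed.
Lemma blk_d_inv_bounded : is_bounded_op ip di.
Proof. by case: blk_d_inverse. Qed.

(* The Schur complement [a - b d^-1 c] inverts [a^*], by [a^* a - c^* c = 1] and [a^* b = c^* d]. *)
Lemma inv_adj_a x : inv_op ip a' x = a x - b (di (c x)).
Proof.
have hw : a' (a x - b (di (c x))) = x.
  apply: ip_ext => z; rewrite -(ip_adjr a_bounded) ipBr ip_blk_ab_cd blk_dKV.
  exact: ip_blk_aa_cc.
by rewrite -{1}hw; case: adj_a_inverse => _ [-> _].
Qed.

Definition vphi (p : K) : K := (p.1, (T p).2).
Definition vpsi (u : K) : K := (u.1, di (u.2 - c u.1)).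

Lemma vpsiK : cancel vpsi vphi.
Proof. by case=> u1 u2; rewrite /vphi /vpsi (block_decomp T_bounded) /= blk_dKV addrC subrK. Qed.
Lemma vphiK : cancel vphi vpsi.
Proof. by case=> p1 p2; rewrite /vphi /vpsi (block_decomp T_bounded) /= addrAC subrr add0r blk_dK. Qed.

Lemma Vop_vphi p : Vop ip T (vphi p) = ((T p).1, p.2).
Proof.
have [[di_lin _] [b_lin _]] := (blk_d_inv_bounded, b_bounded).
case: p => p1 p2; rewrite /Vop /vphi /= (block_decomp T_bounded) /=.
rewrite (linD _ _ di_lin) blk_dK inv_adj_a (linD _ _ b_lin).
by rewrite addrA subrK addKr.
Qed.

Lemma ip_vphi p v : ipk (vphi p) v = ipk p (v.1 + c' v.2, d' v.2).
Proof.
case: p => p1 p2; rewrite /vphi /ipK (block_decomp T_bounded) /= ipDl ipDr.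
by rewrite (ip_adjr c_bounded) (ip_adjr d_bounded); ring.
Qed.
Lemma ip_vpsi u v :
  ipk (vpsi u) v = ipk u (v.1 - c' (adj ip di v.2), adj ip di v.2).
Proof.
case: u => u1 u2; rewrite /vpsi /ipK /= (ip_adjr blk_d_inv_bounded) ipBl ipBr.
by rewrite (ip_adjr c_bounded); ring.
Qed.

Lemma g_gess_Vop : gfun ipk T = gfun ipk (Vop ip T) /\ gess ipk T = gess ipk (Vop ip T).
Proof.
apply: (g_gess_transport vpsiK vphiK ip_vphi ip_vpsi) => p.
  by rewrite Vop_vphi !nrm2K_pair /vphi /=; lra.
by rewrite Vop_vphi !nrm2K_pair /vphi /= (nrm2_distC p.2).
Qed.

Lemma g_gess_inv : gfun ipk T = gfun ipk Ti /\ gess ipk T = gess ipk Ti.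
Proof.
apply: (g_gess_transport TinvK TK (ipK_adjr T_bounded) (ipK_adjr Tinv_bounded)) => p.
  by rewrite TK addrC.
by rewrite TK !nrm2K_pair /= (nrm2_distC (T p).1) (nrm2_distC (T p).2).
Qed.

Lemma g_gess_adj : gfun ipk Ti = gfun ipk (adj ipk T) /\ gess ipk Ti = gess ipk (adj ipk T).
Proof.
rewrite adj_J_unitary; apply: (g_gess_transport JopK JopK ipK_Jl ipK_Jl) => p.
  by rewrite JopK !nrm2K_J.
by rewrite JopK -JopB nrm2K_J.
Qed.

End JUnitary.
End Hilbert.

Theorem proposition4p5 (R : realType) (H : lmodType R[i]) (ip : H -> H -> R[i])
  (hH : is_sep_hilbert ip) (T : H * H -> H * H) (hT : J_unitary ip T) :
  (gfun (ipK ip) (Vop ip T) = gfun (ipK ip) T /\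
      gess (ipK ip) (Vop ip T) = gess (ipK ip) T /\
      gfun (ipK ip) T = gfun (ipK ip) (adj (ipK ip) T) /\
      gfun (ipK ip) (adj (ipK ip) T) = gfun (ipK ip) (inv_op (ipK ip) T) /\
      gess (ipK ip) T = gess (ipK ip) (adj (ipK ip) T) /\
      gess (ipK ip) (adj (ipK ip) T) = gess (ipK ip) (inv_op (ipK ip) T)).
Proof.
case: hH => hip hcomplete _.
have [gV eV] := g_gess_Vop hip hcomplete hT.
have [gI eI] := g_gess_inv hip hcomplete hT.
have [gA eA] := g_gess_adj hip hT.
by rewrite -gV -eV -gA -eA gI eI.
Qed.
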